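(* For every nonnegative integer $k$ and all integers $i,j\geq 2k+3$, we have $R_k^{\mathcal{SP}}(i,j)=i+j-1$, where $\mathcal{SP}$ is the class of split graphs.
   Context: All graphs are finite and simple. For a graph $G$ and a nonnegative integer $k$, a $k$-sparse $j$-set is a set of $j$ vertices of $G$ inducing a subgraph of maximum degree at most $k$; a $k$-dense $i$-set is a set of $i$ vertices of $G$ that is $k$-sparse in the complement of $G$. For a graph class $\mathcal{G}$, $R_k^{\mathcal{G}}(i,j)$ is the smallest natural number $n$ such that every graph on $n$ vertices in $\mathcal{G}$ has either a $k$-dense $i$-set or a $k$-sparse $j$-set. A split graph is a graph whose vertex set can be partitioned into a clique and an independent set. *)

From mathcomp Require Import all_boot.
Set Implicit Arguments. Unset Strict Implicit. Unset Printing Implicit Defensive.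

Definition simple_graph (T : finType) (e : rel T) : Prop :=
  symmetric e /\ irreflexive e.

Definition compl_rel (T : finType) (e : rel T) : rel T :=
  fun x y => (x != y) && ~~ e x y.

Definition max_deg_le (T : finType) (e : rel T) (k : nat) (S : {set T}) : bool :=
  [forall v in S, #|[set u in S | e v u]| <= k].

Definition k_sparse_set (T : finType) (e : rel T) (k j : nat) (S : {set T}) : bool :=
  (#|S| == j) && max_deg_le e k S.

Definition k_dense_set (T : finType) (e : rel T) (k i : nat) (S : {set T}) : bool :=
  k_sparse_set (compl_rel e) k i S.

Definition is_split (T : finType) (e : rel T) : Prop :=
  exists C I : {set T},
    [/\ C :&: I = set0, C :|: I = setT,
        (forall x y, x \in C -> y \in C -> x != y -> e x y) &
        (forall x y, x \in I -> y \in I -> ~~ e x y)].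

Definition ramsey_split_prop (k i j n : nat) : Prop :=
  forall e : rel 'I_n, simple_graph e -> is_split e ->
    (exists S : {set 'I_n}, k_dense_set e k i S) \/
    (exists S : {set 'I_n}, k_sparse_set e k j S).

Definition is_R_split (k i j r : nat) : Prop :=
  ramsey_split_prop k i j r /\ (forall n, n < r -> ~ ramsey_split_prop k i j n).

(* A split graph on i + j - 1 vertices has a clique of i or an independent
   set of j vertices, and i vertices of a clique form a k-dense set, j vertices
   of an independent set a k-sparse one.
   Conversely, take a clique K of i - 1 and an independent set of j - 1
   vertices, cut both by a set L into parts of more than k vertices, and join a
   vertex of K to one outside K iff exactly one of them lies in L.  A j-set
   meets K in some v, which has i - 2 neighbours in K and more than k outside
   K, while only i - 2 vertices lie outside the j-set; dually for i-sets and
   non-neighbours.  Smaller graphs embed as initial segments of vertices. *)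

From mathcomp Require Import all_boot zify.

Set Implicit Arguments.
Unset Strict Implicit.
Unset Printing Implicit Defensive.

Lemma ex_subset_card (T : finType) (A : {set T}) n :
  n <= #|A| -> exists2 B : {set T}, B \subset A & #|B| = n.
Proof.
case/card_geqP=> s [s_uniq <- sA]; exists [set x in s].
  by apply/subsetP=> x; rewrite inE => /sA.
by rewrite cardsE; apply/card_uniqP.
Qed.

Lemma independent_sparse_set (T : finType) (e : rel T) k (S : {set T}) :
  {in S &, forall x y, ~~ e x y} -> k_sparse_set e k #|S| S.
Proof.
move=> indS; rewrite /k_sparse_set eqxx; apply/forallP=> v; apply/implyP=> vS.
rewrite (_ : [set u in S | e v u] = set0) ?cards0 //.
apply/eqP; rewrite -subset0; apply/subsetP=> u; rewrite inE => /andP[uS].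
by rewrite (negbTE (indS _ _ vS uS)).
Qed.

Lemma clique_dense_set (T : finType) (e : rel T) k (S : {set T}) :
  {in S &, forall x y, x != y -> e x y} -> k_dense_set e k #|S| S.
Proof.
move=> cliqueS; apply: independent_sparse_set => x y xS yS.
by rewrite /compl_rel negb_and negbK; case: eqVneq => //= /cliqueS ->.
Qed.

Lemma split_dense_or_sparse (T : finType) (e : rel T) k i j :
  is_split e -> i + j - 1 <= #|T| ->
  (exists S, k_dense_set e k i S) \/ (exists S, k_sparse_set e k j S).
Proof.
move=> [C [I [CI0 CIT cliqueC indI]]] cardT.
have cardCI : #|C| + #|I| = #|T|.
  by rewrite -cardsUI CIT CI0 cards0 addn0 cardsT.
have [iC | ltCi] := leqP i #|C|.
  have [S sSC <-] := ex_subset_card iC; left; exists S.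
  by apply: clique_dense_set; apply: sub_in2 cliqueC; apply/subsetP.
have [|S sSI <-] := @ex_subset_card _ I j; first by lia.
right; exists S.
by apply: independent_sparse_set; apply: sub_in2 indI; apply/subsetP.
Qed.

Section Embedding.

Variables (T T' : finType) (f : T' -> T).
Hypothesis f_inj : injective f.

Lemma sparse_set_imset (e : rel T) (e' : rel T') k s (S : {set T'}) :
  e' =2 relpre f e -> k_sparse_set e' k s S -> k_sparse_set e k s (f @: S).
Proof.
move=> ee' /andP[/eqP cardS /forallP degS]; apply/andP; split.
  by rewrite card_imset // cardS.
apply/forallP=> w; apply/implyP=> /imsetP[v vS ->].
apply: leq_trans (implyP (degS v) vS); rewrite -(card_imset _ f_inj).
apply/subset_leq_card/subsetP=> x; rewrite inE => /andP[/imsetP[u uS ->] evu].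
by rewrite imset_f // inE uS ee'.
Qed.

Lemma dense_set_imset (e : rel T) k s (S : {set T'}) :
  k_dense_set (relpre f e) k s S -> k_dense_set e k s (f @: S).
Proof. by apply: sparse_set_imset => x y; rewrite /= /compl_rel inj_eq. Qed.

Lemma simple_graph_relpre (e : rel T) :
  simple_graph e -> simple_graph (relpre f e).
Proof.
by case=> e_sym e_irr; split=> [x y | x] /=; [apply: e_sym | apply: e_irr].
Qed.

Lemma is_split_relpre (e : rel T) : is_split e -> is_split (relpre f e).
Proof.
case=> [C [I [CI0 CIT cliqueC indI]]]; exists (f @^-1: C), (f @^-1: I); split.
- by rewrite -preimsetI CI0 preimset0.
- by rewrite -preimsetU CIT preimsetT.
- by move=> x y; rewrite !inE => xC yC xy; apply: cliqueC; rewrite ?inj_eq.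
- by move=> x y; rewrite !inE; apply: indI.
Qed.

End Embedding.

Lemma ramsey_split_prop_monotone k i j n m :
  n <= m -> ramsey_split_prop k i j n -> ramsey_split_prop k i j m.
Proof.
move=> le_nm ramsey_n e e_simple e_split.
pose f := widen_ord le_nm.
have f_inj : injective f by move=> x y /(congr1 val) /= /val_inj.
have [[S denseS] | [S sparseS]] :=
  ramsey_n _ (simple_graph_relpre f e_simple) (is_split_relpre f_inj e_split).
  by left; exists (f @: S); apply: dense_set_imset.
by right; exists (f @: S); apply: sparse_set_imset sparseS.
Qed.

Lemma clique_no_sparse_set (T : finType) (e : rel T) (C : {set T}) k s :
  {in C &, forall x y, x != y -> e x y} ->
  {in C, forall v, k < #|[set u in ~: C | e v u]|} ->
  #|~: C| < s -> ~ exists S, k_sparse_set e k s S.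
Proof.
move=> cliqueC degC ltCs [S /andP[/eqP cardS /forallP degS]].
have [v vS vC] : exists2 v, v \in S & v \in C.
  apply/exists_inP; apply: contraLR ltCs.
  rewrite negb_exists_in -leqNgt => /forall_inP SC.
  rewrite -cardS; apply/subset_leq_card/subsetP=> u uS; rewrite inE; exact: SC.
pose N := [set u | e v u].
have cardC1 : #|C :\ v| <= #|N :&: C|.
  apply/subset_leq_card/subsetP=> u; rewrite !inE => /andP[uv uC].
  by rewrite uC andbT cliqueC // eq_sym.
have cardNC : #|N :\: C| = #|[set u in ~: C | e v u]|.
  by apply: eq_card=> u; rewrite !inE andbC.
have cardNS : #|N| <= #|[set u in S | e v u]| + #|~: S|.
  apply: leq_trans (leq_card_setU _ _); apply/subset_leq_card/subsetP=> u.
  by rewrite !inE => evu; rewrite evu andbT; case: (u \in S).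
have := cardsID C N; have := cardsD1 v C; have := cardsC S; have := cardsC C.
have := degC v vC; have := implyP (degS v) vS; rewrite vC; lia.
Qed.

Definition xor_split_graph (T : finType) (K L : {set T}) : rel T :=
  fun x y => (x != y) &&
    if (x \in K) == (y \in K) then x \in K else (x \in L) != (y \in L).

Section XorSplitGraph.

Variables (T : finType) (K L : {set T}) (k : nat).
Local Notation e := (xor_split_graph K L).

Lemma xor_split_graph_simple : simple_graph e.
Proof.
split=> [x y | x]; last by rewrite /xor_split_graph eqxx.
rewrite /xor_split_graph eq_sym.
by case: (x \in K) (y \in K) (x \in L) (y \in L) => [] [] [] [].
Qed.

Lemma xor_split_graph_split : is_split e.
Proof.
exists K, (~: K); split; [exact: setICr | exact: setUCr | |].
  by move=> x y xK yK xy; rewrite /xor_split_graph xy xK yK.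
move=> x y; rewrite !inE /xor_split_graph => /negbTE xK /negbTE yK.
by rewrite xK yK andbF.
Qed.

Lemma xor_split_graph_no_sparse s :
  k < #|~: K :&: L| -> k < #|~: K :\: L| -> #|~: K| < s ->
  ~ exists S, k_sparse_set e k s S.
Proof.
move=> kCKL kCKdL.
apply: clique_no_sparse_set => [x y xK yK xy | v vK].
  by rewrite /xor_split_graph xy xK yK.
have -> : [set u in ~: K | e v u] = if v \in L then ~: K :\: L else ~: K :&: L.
  apply/setP=> u; rewrite !inE /xor_split_graph vK.
  have [uK | uK] := boolP (u \in K).
    by case: (v \in L); rewrite !inE uK ?andbF.
  rewrite (_ : v != u) /=; last by apply: contraNneq uK => <-.
  by case: (v \in L); rewrite !inE (negbTE uK); case: (u \in L).
by case: (v \in L).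
Qed.

Lemma xor_split_graph_no_dense s :
  k < #|K :&: L| -> k < #|K :\: L| -> #|K| < s ->
  ~ exists S, k_dense_set e k s S.
Proof.
move=> kKL kKdL ltKs.
apply: (@clique_no_sparse_set _ _ (~: K)) => [x y | v |]; last by rewrite setCK.
  rewrite !inE /compl_rel /xor_split_graph => /negbTE xK /negbTE yK ->.
  by rewrite xK yK.
rewrite inE setCK => vK.
have -> : [set u in K | compl_rel e v u] = if v \in L then K :&: L else K :\: L.
  apply/setP=> u; rewrite !inE /compl_rel /xor_split_graph (negbTE vK).
  have [uK | uK] := boolP (u \in K); last first.
    by case: (v \in L); rewrite !inE (negbTE uK) ?andbF.
  rewrite (_ : v != u) /=; last by apply: contraNneq vK => ->.
  by case: (v \in L); rewrite !inE uK; case: (u \in L).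
by case: (v \in L).
Qed.

End XorSplitGraph.

Lemma ex_balanced_partition (T : finType) k a b :
  #|T| = a + b -> k.+1 + k.+1 <= a -> k.+1 + k.+1 <= b ->
  exists K L : {set T}, [/\ #|K| = a,
    k < #|K :&: L|, k < #|K :\: L|, k < #|~: K :&: L| & k < #|~: K :\: L|].
Proof.
move=> cardT le_a le_b.
have [|K _ cardK] := @ex_subset_card _ [set: T] a.
  by rewrite cardsT cardT leq_addr.
have cardCK : #|~: K| = b by have := cardsC K; rewrite cardK cardT => /addnI.
have [|P sPK cardP] := @ex_subset_card _ K k.+1; first by lia.
have [|Q sQCK cardQ] := @ex_subset_card _ (~: K) k.+1; first by lia.
have KPQ : K :&: (P :|: Q) = P.
  rewrite setIUr (setIidPr sPK) (@disjoint_setI0 _ K Q) ?setU0 //.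
  by rewrite disjoint_sym disjoints_subset.
have CKPQ : ~: K :&: (P :|: Q) = Q.
  rewrite setIUr (setIidPr sQCK) (@disjoint_setI0 _ (~: K) P) ?set0U //.
  by rewrite disjoint_sym disjoints_subset setCK.
exists K, (P :|: Q); rewrite !cardsD KPQ CKPQ; split; lia.
Qed.

Lemma no_ramsey_split_prop k i j : 2 * k + 3 <= i -> 2 * k + 3 <= j ->
  ~ ramsey_split_prop k i j (i.-1 + j.-1).
Proof.
move=> le_i le_j ramsey.
have [||K [L [cardK kKL kKdL kCKL kCKdL]]] :=
  @ex_balanced_partition _ k _ _ (card_ord (i.-1 + j.-1)); [lia | lia |].
have := cardsC K; rewrite card_ord cardK => /addnI cardCK.
case: (ramsey _ (xor_split_graph_simple K L) (xor_split_graph_split K L)).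
  by apply: (xor_split_graph_no_dense kKL kKdL); rewrite cardK; lia.
by apply: (xor_split_graph_no_sparse kCKL kCKdL); rewrite cardCK; lia.
Qed.

Theorem corollary6p1 (k i j : nat) :
  2 * k + 3 <= i -> 2 * k + 3 <= j -> is_R_split k i j (i + j - 1).
Proof.
move=> le_i le_j; split=> [e _ e_split | n lt_n ramsey_n].
  by apply: split_dense_or_sparse e_split _; rewrite card_ord.
apply: (no_ramsey_split_prop le_i le_j).
by apply: (ramsey_split_prop_monotone _ ramsey_n); lia.
Qed.
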